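(* Let $(B,\cdot,+,-,{}^{-1},0)$ be a right near-domain (as defined in the context), with $B_1=B\setminus\{0\}$, identity $e$ of the group $B_1$, $L(x)=0-x$ for $x\in B_1$, and let $h,r,v$ be elements as in axioms A5, A6, A7. Then: 1. $0\cdot x=0$ for every $x\in B_1$; 2. $h(x,y)=(L(x))^{-1}L(xy)$ for all $x,y\in B_1$; 3. for all $y,z\in B_1$ with $y+z\neq 0$, one has $L(z)-y\neq 0$ and $r(y,z)=(L(z)-y)^{-1}L(y+z)$; 4. $x-z=x\,(v(z))^{-1}+L(z)$ for all $x\in B$, $z\in B_1$; 5. $v(z)=(L(L(z)))^{-1}z$ for all $z\in B_1$.
   Context: A right near-domain is a set $B$ with a distinguished element $0\in B$, where $B_1:=B\setminus\{0\}$, together with maps $+:B\times B_1\to B$, $-:B\times B_1\to B$, $\cdot:B\times B_1\to B$ and ${}^{-1}:B_1\to B_1$, satisfying: A1. $(x-y)+y=x$ for all $x\in B$, $y\in B_1$; A2. $(x+y)-y=x$ for all $x\in B$, $y\in B_1$; A3. $x-x=0$ for all $x\in B_1$; A4. $B_1$ is closed under $\cdot$ and $(B_1,\cdot,{}^{-1})$ is a group, with identity element $e\in B_1$; A5. for all $y,z\in B_1$ there is $h(y,z)\in B_1$ such that $(x+y)z=x\,h(y,z)+yz$ for all $x\in B$; A6. for all $y,z\in B_1$ with $y+z\neq 0$ there is $r(y,z)\in B_1$ such that $(x+y)+z=x\,r(y,z)+(y+z)$ for all $x\in B$; A7. for all $z\in B_1$ there is $v(z)\in B_1$ such that $(x+(0-z))+z=x\,v(z)$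 for all $x\in B$ (it follows from A1–A3 that $0-z\neq 0$, so the left side is defined). Notation: $L(x)=0-x$ for $x\in B_1$ (so $L:B_1\to B_1$), and $xy$ denotes $x\cdot y$. *)

(* a right near-domain is encoded by a carrier type B with
   TOTAL operations; the axioms only constrain them when the second argument
   lies in B_1 = B \ {0} (values at a zero second argument are junk and never
   used).  *)

Set Implicit Arguments.
Section NearDomain.
Variables (B : Type) (zero : B)
  (add sub mul : B -> B -> B) (inv : B -> B) (e : B).

Definition Lmap (x : B) : B := sub zero x.

Definition is_h (h : B -> B -> B) : Prop :=
  forall y z, y <> zero -> z <> zero ->
    h y z <> zero /\ forall x, mul (add x y) z = add (mul x (h y z)) (mul y z).

Definition is_r (r : B -> B -> B) : Prop :=
  forall y z, y <> zero -> z <> zero -> add y z <> zero ->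
    r y z <> zero /\ forall x, add (add x y) z = add (mul x (r y z)) (add y z).

Definition is_v (v : B -> B) : Prop :=
  forall z, z <> zero ->
    v z <> zero /\ forall x, add (add x (sub zero z)) z = mul x (v z).

Definition right_near_domain : Prop :=
  (forall x y, y <> zero -> add (sub x y) y = x) /\
  (forall x y, y <> zero -> sub (add x y) y = x) /\
  (forall x, x <> zero -> sub x x = zero) /\
  (forall x y, x <> zero -> y <> zero -> mul x y <> zero) /\
  (forall x y z, x <> zero -> y <> zero -> z <> zero ->
      mul (mul x y) z = mul x (mul y z)) /\
  e <> zero /\
  (forall x, x <> zero -> mul e x = x /\ mul x e = x) /\
  (forall x, x <> zero ->
      inv x <> zero /\ mul x (inv x) = e /\ mul (inv x) x = e) /\
  (exists h, is_h h) /\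
  (exists r, is_r r) /\
  (exists v, is_v v).

End NearDomain.

(** Each identity comes from specialising A5, A6 or A7 at an argument that
    makes the left-hand side collapse through [L z + z = 0] (A1), e.g. A5 at
    [x = L y] or A6 at [x = L z - y], and then solving in the group [B_1].
    The one subtle point is [0 x = 0]: right multiplication by [c] in [B_1]
    is injective on all of [B], since A5 at [y = e] writes [s c] as
    [(s - e) h(e,c) + c], and [0 h(e,c) = 0] by A5 at [x = 0]. *)

From Stdlib Require Import Classical.

Set Implicit Arguments.

Section RightNearDomain.

Variables (B : Type) (zero : B) (add sub mul : B -> B -> B) (inv : B -> B) (e : B).
Hypothesis Hnd : right_near_domain zero add sub mul inv e.

Declare Scope near_domain_scope.
Local Infix "+" := add : near_domain_scope.
Local Infix "-" := sub : near_domain_scope.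
Local Infix "*" := mul : near_domain_scope.
Local Notation "x ^-1" := (inv x) (at level 3, format "x ^-1") : near_domain_scope.
Local Notation L := (Lmap zero sub).
Local Open Scope near_domain_scope.

Lemma subrK x y : y <> zero -> x - y + y = x.
Proof. destruct Hnd as (A1 & _); apply A1. Qed.

Lemma addrK x y : y <> zero -> x + y - y = x.
Proof. destruct Hnd as (_ & A2 & _); apply A2. Qed.

Lemma subrr x : x <> zero -> x - x = zero.
Proof. destruct Hnd as (_ & _ & A3 & _); apply A3. Qed.

Lemma mulf_neq0 x y : x <> zero -> y <> zero -> x * y <> zero.
Proof. destruct Hnd as (_ & _ & _ & Mc & _); apply Mc. Qed.

Lemma mulA_nz x y z : x <> zero -> y <> zero -> z <> zero -> x * y * z = x * (y * z).
Proof. destruct Hnd as (_ & _ & _ & _ & As & _); apply As. Qed.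

Lemma e_neq0 : e <> zero.
Proof. now destruct Hnd as (_ & _ & _ & _ & _ & He & _). Qed.

Lemma mul1r x : x <> zero -> e * x = x.
Proof. destruct Hnd as (_ & _ & _ & _ & _ & _ & Id & _); apply Id. Qed.

Lemma mulr1_nz x : x <> zero -> x * e = x.
Proof. destruct Hnd as (_ & _ & _ & _ & _ & _ & Id & _); apply Id. Qed.

Lemma invr_neq0 x : x <> zero -> x^-1 <> zero.
Proof. destruct Hnd as (_ & _ & _ & _ & _ & _ & _ & Iv & _); apply Iv. Qed.

Lemma mulrV x : x <> zero -> x * x^-1 = e.
Proof. destruct Hnd as (_ & _ & _ & _ & _ & _ & _ & Iv & _); apply Iv. Qed.

Lemma mulVr x : x <> zero -> x^-1 * x = e.
Proof. destruct Hnd as (_ & _ & _ & _ & _ & _ & _ & Iv & _); apply Iv. Qed.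

Lemma add0r y : y <> zero -> zero + y = y.
Proof. intros Hy. rewrite <- (subrr Hy) at 1. now apply subrK. Qed.

Lemma addLr z : z <> zero -> L z + z = zero.
Proof. apply subrK. Qed.

Lemma Lmap_neq0 z : z <> zero -> L z <> zero.
Proof.
  intros Hz HLz. apply Hz.
  now rewrite <- (addLr Hz), HLz, add0r.
Qed.

Lemma addIr y a b : y <> zero -> a + y = b + y -> a = b.
Proof. intros Hy E. now rewrite <- (addrK a Hy), E, addrK. Qed.

Lemma mulKr a x : a <> zero -> x <> zero -> a^-1 * (a * x) = x.
Proof.
  intros Ha Hx. rewrite <- mulA_nz, mulVr, mul1r; auto using invr_neq0.
Qed.

Lemma mulrK_nz x c : x <> zero -> c <> zero -> x * c * c^-1 = x.
Proof.
  intros Hx Hc. rewrite mulA_nz, mulrV, mulr1_nz; auto using invr_neq0.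
Qed.

Lemma mulVKr_nz x c : x <> zero -> c <> zero -> x * c^-1 * c = x.
Proof.
  intros Hx Hc. rewrite mulA_nz, mulVr, mulr1_nz; auto using invr_neq0.
Qed.

Lemma mulIf_of_mul0 c x y : c <> zero -> zero * c = zero -> x * c = y * c -> x = y.
Proof.
  intros Hc H0 E.
  destruct (classic (x = zero)) as [Hx | Hx], (classic (y = zero)) as [Hy | Hy].
  - congruence.
  - subst x. exfalso. apply (mulf_neq0 Hy Hc). congruence.
  - subst y. exfalso. apply (mulf_neq0 Hx Hc). congruence.
  - now rewrite <- (mulrK_nz Hx Hc), E, mulrK_nz.
Qed.

Lemma mul0h h (Hh : is_h zero add mul h) y z :
  y <> zero -> z <> zero -> zero * h y z = zero.
Proof.
  intros Hy Hz. destruct (Hh y z Hy Hz) as [_ Dh].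
  specialize (Dh zero). rewrite add0r in Dh by exact Hy.
  rewrite <- (addrK (zero * h y z) (mulf_neq0 Hy Hz)), <- Dh.
  apply subrr, mulf_neq0; assumption.
Qed.

Lemma mulIf c x y : c <> zero -> x * c = y * c -> x = y.
Proof.
  intros Hc E.
  destruct Hnd as (_ & _ & _ & _ & _ & _ & _ & _ & [h Hh] & _).
  destruct (Hh e c e_neq0 Hc) as [Hk Dk].
  assert (Ek : (x - e) * h e c = (y - e) * h e c).
  { apply (addIr (mulf_neq0 e_neq0 Hc)).
    now rewrite <- !Dk, !subrK by exact e_neq0. }
  apply (mulIf_of_mul0 Hk (mul0h Hh e_neq0 Hc)) in Ek.
  now rewrite <- (subrK x e_neq0), <- (subrK y e_neq0), Ek.
Qed.

Lemma mul0r x : x <> zero -> zero * x = zero.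
Proof.
  intros Hx. destruct (classic (zero * x = zero)) as [| Hu]; [assumption | exfalso].
  apply (mulf_neq0 Hu (invr_neq0 Hx)).
  symmetry. apply (mulIf Hx). now rewrite mulVKr_nz.
Qed.

Lemma mulA x y z : y <> zero -> z <> zero -> x * y * z = x * (y * z).
Proof.
  intros Hy Hz. destruct (classic (x = zero)) as [-> | Hx].
  - now rewrite !mul0r by auto using mulf_neq0.
  - now apply mulA_nz.
Qed.

Lemma mulr1 x : x * e = x.
Proof.
  destruct (classic (x = zero)) as [-> | Hx].
  - exact (mul0r e_neq0).
  - exact (mulr1_nz Hx).
Qed.

Lemma hE h (Hh : is_h zero add mul h) x y :
  x <> zero -> y <> zero -> h x y = (L x)^-1 * L (x * y).
Proof.
  intros Hx Hy. destruct (Hh x y Hx Hy) as [Hk Dh].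
  specialize (Dh (L x)). rewrite addLr, mul0r in Dh by assumption.
  assert (E : L x * h x y = L (x * y)).
  { apply (f_equal (fun t => t - x * y)) in Dh.
    now rewrite addrK in Dh by auto using mulf_neq0. }
  now rewrite <- E, mulKr by auto using Lmap_neq0.
Qed.

Lemma mul_r_eq r (Hr : is_r zero add mul r) y z
  (Hy : y <> zero) (Hz : z <> zero) (Hyz : y + z <> zero) :
  (L z - y) * r y z = L (y + z).
Proof.
  destruct (Hr y z Hy Hz Hyz) as [_ Dr].
  specialize (Dr (L z - y)). rewrite subrK, addLr in Dr by assumption.
  apply (f_equal (fun t => t - (y + z))) in Dr. now rewrite addrK in Dr.
Qed.

Lemma Lmap_sub_neq0 r (Hr : is_r zero add mul r) y z :
  y <> zero -> z <> zero -> y + z <> zero -> L z - y <> zero.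
Proof.
  intros Hy Hz Hyz H0. apply (Lmap_neq0 Hyz).
  rewrite <- (mul_r_eq Hr Hy Hz Hyz), H0. apply mul0r, (Hr y z Hy Hz Hyz).
Qed.

Lemma rE r (Hr : is_r zero add mul r) y z :
  y <> zero -> z <> zero -> y + z <> zero -> r y z = (L z - y)^-1 * L (y + z).
Proof.
  intros Hy Hz Hyz.
  rewrite <- (mul_r_eq Hr Hy Hz Hyz), mulKr; [reflexivity | |].
  - exact (Lmap_sub_neq0 Hr Hy Hz Hyz).
  - apply (Hr y z Hy Hz Hyz).
Qed.

Lemma subrE v (Hv : is_v zero add sub mul v) x z :
  z <> zero -> x - z = x * (v z)^-1 + L z.
Proof.
  intros Hz. destruct (Hv z Hz) as [Hvz Dv].
  specialize (Dv (x * (v z)^-1)).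
  rewrite mulA, mulVr, mulr1 in Dv by auto using invr_neq0.
  rewrite <- Dv at 1. now apply addrK.
Qed.

Lemma vE v (Hv : is_v zero add sub mul v) z :
  z <> zero -> v z = (L (L z))^-1 * z.
Proof.
  intros Hz. destruct (Hv z Hz) as [Hvz Dv].
  specialize (Dv (L (L z))). fold (L z) in Dv.
  rewrite addLr, add0r in Dv by auto using Lmap_neq0.
  now rewrite <- (mulKr (Lmap_neq0 (Lmap_neq0 Hz)) Hvz), <- Dv.
Qed.

End RightNearDomain.

Theorem mainTheorem1 (B : Type) (zero : B)
  (add sub mul : B -> B -> B) (inv : B -> B) (e : B)
  (h r : B -> B -> B) (v : B -> B) :
  right_near_domain zero add sub mul inv e ->
  is_h zero add mul h -> is_r zero add mul r -> is_v zero add sub mul v ->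
  (* 1 *) (forall x, x <> zero -> mul zero x = zero) /\
  (* 2 *) (forall x y, x <> zero -> y <> zero ->
             h x y = mul (inv (Lmap zero sub x)) (Lmap zero sub (mul x y))) /\
  (* 3 *) (forall y z, y <> zero -> z <> zero -> add y z <> zero ->
             sub (Lmap zero sub z) y <> zero /\
             r y z = mul (inv (sub (Lmap zero sub z) y)) (Lmap zero sub (add y z))) /\
  (* 4 *) (forall x z, z <> zero ->
             sub x z = add (mul x (inv (v z))) (Lmap zero sub z)) /\
  (* 5 *) (forall z, z <> zero ->
             v z = mul (inv (Lmap zero sub (Lmap zero sub z))) z).
Proof.
  intros Hnd Hh Hr Hv.
  split; [exact (mul0r Hnd) |].
  split; [exact (hE Hnd Hh) |].
  split; [| split; [exact (subrE Hnd Hv) | exact (vE Hnd Hv)]].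
  intros y z Hy Hz Hyz.
  split; [exact (Lmap_sub_neq0 Hnd Hr Hy Hz Hyz) | exact (rE Hnd Hr Hy Hz Hyz)].
Qed.
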